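(* Let $A=[A_1,\dots,A_n]\in\mathbb{R}^{p\times n}$ satisfy $A\mathbf{1}=\mathbf{0}$, and let $r$ be a positive integer with $r\le \operatorname{rank}(A)$. Let $A=U\Sigma V$ be the compact SVD of $A$ with singular values in descending order, where $V$ has orthonormal rows, and let $V_{1:r}$ denote the first $r$ rows of $V$. Put $\beta=-\min_{i,j}(A^TA)_{ij}$, $\tilde A=\begin{bmatrix}\sqrt{\beta}\,\mathbf{1}^T\\ A\end{bmatrix}$, $W=\tilde A^T\tilde A$ and $L=\operatorname{diag}(W\mathbf{1})-W$. Then $W$ has nonnegative entries, $W_{ij}=\phi(A_i,A_j)$ for the linear kernel $\phi(A_i,A_j)=A_i^TA_j+\beta$, and $L$ is its graph Laplacian. Moreover, the PCA problem $$\min_{D\in\mathbb{R}^{p\times r},\,X\in\mathbb{R}^{r\times n}}\|A-DX\|_F^2\quad\text{s.t. } XX^T=I$$ and the Laplacian-eigenmap problem $$\min_{X\in\mathbb{R}^{r\times n}}\operatorname{tr}\{\tilde XL\tilde X^T\}\quad\text{s.t. }\tilde X=\begin{bmatrix}\tfrac{1}{\sqrt n}\mathbf{1}^T\\ X\end{bmatrix},\ \tilde X\tilde X^T=I$$ have the same solutions $X$; in particular $X=V_{1:r}$ is a common solution.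
   Context: $\mathbf{1}$ denotes the all-ones vector of the appropriate length and $\operatorname{diag}(v)$ the diagonal matrix with diagonal $v$. Columns of $A$ are the $n$ data samples. *)

From HB Require Import structures.
From mathcomp Require Import all_boot all_order all_algebra.
Set Implicit Arguments. Unset Strict Implicit. Unset Printing Implicit Defensive.
Import Order.TTheory GRing.Theory Num.Theory.
Local Open Scope ring_scope.

Section Defs.
Variable R : rcfType.

Definition ones (n : nat) : 'cV[R]_n := const_mx 1.

Definition is_min_entry (m n : nat) (M : 'M[R]_(m, n)) (mu : R) : Prop :=
  (forall i j, mu <= M i j) /\ (exists i j, M i j = mu).

Definition frob2 (m n : nat) (M : 'M[R]_(m, n)) : R :=
  \sum_i \sum_j (M i j) ^+ 2.

Definition Atilde (p n : nat) (A : 'M[R]_(p, n)) (beta : R) : 'M[R]_(1 + p, n) :=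
  col_mx (const_mx (Num.sqrt beta)) A.

Definition Wmat (p n : nat) (A : 'M[R]_(p, n)) (beta : R) : 'M[R]_n :=
  (Atilde A beta)^T *m Atilde A beta.

Definition graph_laplacian (n : nat) (W : 'M[R]_n) : 'M[R]_n :=
  diag_mx (W *m ones n)^T - W.

Definition lin_kernel (p : nat) (beta : R) (a b : 'cV[R]_p) : R :=
  (a^T *m b) 0 0 + beta.

Definition pca_solution (p n r : nat) (A : 'M[R]_(p, n)) (X : 'M[R]_(r, n)) : Prop :=
  X *m X^T = 1%:M /\
  exists D : 'M[R]_(p, r),
    forall (D' : 'M[R]_(p, r)) (X' : 'M[R]_(r, n)),
      X' *m X'^T = 1%:M -> frob2 (A - D *m X) <= frob2 (A - D' *m X').

Definition Xtilde (n r : nat) (X : 'M[R]_(r, n)) : 'M[R]_(1 + r, n) :=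
  col_mx (const_mx (Num.sqrt (n%:R))^-1) X.

Definition le_solution (n r : nat) (L : 'M[R]_n) (X : 'M[R]_(r, n)) : Prop :=
  Xtilde X *m (Xtilde X)^T = 1%:M /\
  forall X' : 'M[R]_(r, n),
    Xtilde X' *m (Xtilde X')^T = 1%:M ->
    \tr (Xtilde X *m L *m (Xtilde X)^T) <= \tr (Xtilde X' *m L *m (Xtilde X')^T).

Definition compact_svd (p n : nat) (A : 'M[R]_(p, n))
    (U : 'M[R]_(p, \rank A)) (s : 'rV[R]_(\rank A)) (V : 'M[R]_(\rank A, n)) : Prop :=
  [/\ U^T *m U = 1%:M, V *m V^T = 1%:M,
      (forall i, 0 < s 0 i),
      (forall i j : 'I_(\rank A), (i <= j)%N -> s 0 j <= s 0 i)
    & A = U *m diag_mx s *m V].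

Definition first_rows (k n r : nat) (hr : (r <= k)%N) (V : 'M[R]_(k, n)) : 'M[R]_(r, n) :=
  rowsub (widen_ord hr) V.

End Defs.

From HB Require Import structures.
From mathcomp Require Import all_boot all_order all_algebra.
From mathcomp Require Import ring lra zify.
Set Implicit Arguments. Unset Strict Implicit. Unset Printing Implicit Defensive.
Import Order.TTheory GRing.Theory Num.Theory.
Local Open Scope ring_scope.

(* For X with orthonormal rows, ||A - D X||^2 = ||A||^2 - ||A X^T||^2
   + ||D - A X^T||^2, so PCA maximises ||A X^T||^2 over such X.  Since
   A 1 = 0, W = beta 1 1^T + A^T A and L = n beta I - W; the constraint on the
   augmented matrix means X X^T = I and X 1 = 0, under which the Laplacian
   objective is n beta r - ||A X^T||^2.  The two problems thus agree because
   an orthonormal X with X 1 <> 0 can always be strictly improved within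
   {X 1 = 0}: replace the unit direction y of the row space of X that carries
   X 1 by a unit vector z orthogonal to 1 and to the remaining rows.  If
   A y <> 0, take z proportional to y minus its mean, which has the same
   image under A but is shorter than y; if A y = 0, the hypothesis
   r <= rank A provides a suitable z in the range of A^T with A z <> 0.
   Finally V_{1:r} is optimal by Ky Fan's principle: ||A X^T||^2 is a sum of
   the sigma_i^2 with weights in [0, 1] adding up to at most r. *)

Lemma exists_mulmx_neq0 (K : pzRingType) m n (B : 'M[K]_(m, n)) :
  B != 0 -> exists u : 'cV[K]_n, B *m u != 0.
Proof.
case/matrix0Pn => i [j Bij]; exists (delta_mx j 0).
by apply/matrix0Pn; exists i, 0; rewrite -colE mxE.
Qed.

Section LinearKernelPCA.
Variable R : rcfType.

Lemma frob2E m n (M : 'M[R]_(m, n)) : frob2 M = \tr (M *m M^T).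
Proof.
rewrite /frob2 /mxtrace; apply: eq_bigr => i _; rewrite !mxE.
by apply: eq_bigr => j _; rewrite !mxE expr2.
Qed.

Lemma frob2_ge0 m n (M : 'M[R]_(m, n)) : 0 <= frob2 M.
Proof. by apply: sumr_ge0 => i _; apply: sumr_ge0 => j _; apply: sqr_ge0. Qed.

Lemma frob2_eq0 m n (M : 'M[R]_(m, n)) : (frob2 M == 0) = (M == 0).
Proof.
apply/eqP/eqP => [M0|->]; last first.
  by rewrite /frob2 big1 // => i _; rewrite big1 // => j _; rewrite mxE expr0n.
apply/matrixP => i j; rewrite mxE; apply/eqP; rewrite -sqrf_eq0; apply/eqP.
have row_ge0 k : 0 <= \sum_j M k j ^+ 2.
  by apply: sumr_ge0 => l _; apply: sqr_ge0.
move: M0; rewrite /frob2 => M0.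
have := @psumr_eq0P _ _ _ _ (fun k _ => row_ge0 k) M0 i isT.
by move/(@psumr_eq0P _ _ _ _ (fun l _ => sqr_ge0 (M i l)))/(_ j isT).
Qed.

Lemma frob2_gt0 m n (M : 'M[R]_(m, n)) : (0 < frob2 M) = (M != 0).
Proof. by rewrite lt_def frob2_ge0 frob2_eq0 andbT. Qed.

Lemma frob20 m n : frob2 (0 : 'M[R]_(m, n)) = 0.
Proof. by apply/eqP; rewrite frob2_eq0. Qed.

Lemma frob2Z m n a (M : 'M[R]_(m, n)) : frob2 (a *: M) = a ^+ 2 * frob2 M.
Proof.
rewrite /frob2 mulr_sumr; apply: eq_bigr => i _; rewrite mulr_sumr.
by apply: eq_bigr => j _; rewrite mxE exprMn.
Qed.

Lemma frob2_trmx m n (M : 'M[R]_(m, n)) : frob2 M^T = frob2 M.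
Proof.
rewrite /frob2 exchange_big.
by apply: eq_bigr => i _; apply: eq_bigr => j _; rewrite mxE.
Qed.

Lemma frob2_row m n (M : 'M[R]_(m, n)) i : frob2 (row i M) = \sum_j M i j ^+ 2.
Proof. by rewrite /frob2 big_ord1; apply: eq_bigr => j _; rewrite mxE. Qed.

Lemma sum_frob2_row m n (M : 'M[R]_(m, n)) : \sum_i frob2 (row i M) = frob2 M.
Proof. by apply: eq_bigr => i _; rewrite frob2_row. Qed.

Lemma frob2_mulmxT p n r (A : 'M[R]_(p, n)) (X : 'M[R]_(r, n)) :
  frob2 (A *m X^T) = \tr (A *m (X^T *m X) *m A^T).
Proof. by rewrite frob2E trmx_mul trmxK !mulmxA. Qed.

Lemma frob2_isometry p k n (U : 'M[R]_(p, k)) (M : 'M[R]_(k, n)) :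
  U^T *m U = 1%:M -> frob2 (U *m M) = frob2 M.
Proof.
by move=> UU; rewrite !frob2E trmx_mul !mulmxA mxtrace_mulC !mulmxA UU mul1mx.
Qed.

Lemma frob2_diag_mul k n (s : 'rV[R]_k) (C : 'M[R]_(k, n)) :
  frob2 (diag_mx s *m C) = \sum_i s 0 i ^+ 2 * frob2 (row i C).
Proof.
rewrite [LHS]/frob2; apply: eq_bigr => i _; rewrite frob2_row mulr_sumr.
by apply: eq_bigr => j _; rewrite mul_diag_mx mxE exprMn.
Qed.

Lemma frob2_mulmxT_le k n r (M : 'M[R]_(k, n)) (X : 'M[R]_(r, n)) :
  X *m X^T = 1%:M -> frob2 (M *m X^T) <= frob2 M.
Proof.
move=> X_orth; set P := X^T *m X.
have PP : (1%:M - P) *m (1%:M - P)^T = 1%:M - P.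
  rewrite raddfB /= trmx1 trmx_mul trmxK -/P mulmxBl mul1mx mulmxBr mulmx1.
  by rewrite mulmxA -(mulmxA X^T) X_orth mulmx1 subrr subr0.
have := frob2_ge0 (M *m (1%:M - P)).
rewrite frob2E trmx_mul mulmxA -(mulmxA M) PP mulmxBr mulmx1 mulmxBl raddfB /=.
by rewrite -frob2E -frob2_mulmxT subr_ge0.
Qed.

Definition vdot k (u v : 'cV[R]_k) : R := (u^T *m v) 0 0.

Lemma vdotE k (u v : 'cV[R]_k) : u^T *m v = (vdot u v)%:M.
Proof. exact: mx11_scalar. Qed.

Lemma vdotC k (u v : 'cV[R]_k) : vdot u v = vdot v u.
Proof. by rewrite /vdot -[u^T *m v]trmxK trmx_mul trmxK mxE. Qed.

Lemma vdotZr k (u v : 'cV[R]_k) a : vdot u (a *: v) = a * vdot u v.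
Proof. by rewrite /vdot -scalemxAr mxE. Qed.

Lemma vdot_gt0 k (u : 'cV[R]_k) : u != 0 -> 0 < vdot u u.
Proof.
have -> : vdot u u = frob2 u^T by rewrite frob2E trmxK /mxtrace big_ord1.
by rewrite frob2_gt0 trmx_eq0.
Qed.

Lemma vdot_sqr k (u : 'cV[R]_k) :
  u != 0 -> exists2 m, 0 < m & vdot u u = m ^+ 2.
Proof.
move=> u0; have u_gt0 := vdot_gt0 u0.
by exists (Num.sqrt (vdot u u)); rewrite ?sqrtr_gt0 ?sqr_sqrtr ?ltW.
Qed.

Lemma unit_scaleV k (u : 'cV[R]_k) m :
  m != 0 -> vdot u u = m ^+ 2 -> (m^-1 *: u)^T *m (m^-1 *: u) = 1%:M.
Proof.
move=> m0 um; rewrite [(_ *: u)^T]linearZ -scalemxAl -scalemxAr vdotE um.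
by rewrite !scale_scalar_mx; congr (_%:M); field.
Qed.

Lemma orthonormal_mulmxTK r n (X : 'M[R]_(r, n)) (q : 'cV[R]_r) :
  X *m X^T = 1%:M -> X *m (X^T *m q) = q.
Proof. by move=> X_orth; rewrite mulmxA X_orth mul1mx. Qed.

Lemma orthonormal_trmx_unit r n (X : 'M[R]_(r, n)) (q : 'cV[R]_r) :
  X *m X^T = 1%:M -> q^T *m q = 1%:M -> (X^T *m q)^T *m (X^T *m q) = 1%:M.
Proof.
by move=> X_orth q_unit; rewrite trmx_mul trmxK -mulmxA orthonormal_mulmxTK.
Qed.

(** * PCA as maximisation of the captured energy *)

Lemma frob2_sub_mul p n r (A : 'M[R]_(p, n)) (D : 'M[R]_(p, r))
    (X : 'M[R]_(r, n)) :
  X *m X^T = 1%:M ->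
  frob2 (A - D *m X) = frob2 A - frob2 (A *m X^T) + frob2 (D - A *m X^T).
Proof.
move=> X_orth; rewrite !frob2E [(A - _)^T]raddfB [(D - _)^T]raddfB /=.
rewrite !trmx_mul !trmxK !mulmxBl !mulmxBr !mulmxA -(mulmxA D X X^T) X_orth.
by rewrite mulmx1 !raddfB /=; ring.
Qed.

Lemma pca_solutionP p n r (A : 'M[R]_(p, n)) (X : 'M[R]_(r, n)) :
  pca_solution A X <->
  X *m X^T = 1%:M /\
  (forall X' : 'M[R]_(r, n),
     X' *m X'^T = 1%:M -> frob2 (A *m X'^T) <= frob2 (A *m X^T)).
Proof.
split=> [[X_orth [D D_min]]|[X_orth X_max]]; split=> //.
  move=> X' X'_orth; have := D_min (A *m X'^T) X' X'_orth.
  rewrite (frob2_sub_mul _ _ X_orth) (frob2_sub_mul _ _ X'_orth) subrr frob20.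
  have := frob2_ge0 (D - A *m X^T); lra.
exists (A *m X^T) => D' X' X'_orth.
rewrite (frob2_sub_mul _ _ X_orth) (frob2_sub_mul _ _ X'_orth) subrr frob20.
have := frob2_ge0 (D' - A *m X'^T); have := X_max X' X'_orth; lra.
Qed.

(** * The Laplacian of the linear kernel *)

Lemma ones_tr_mul n : (ones R n)^T *m ones R n = n%:R%:M.
Proof.
apply/matrixP => i j; rewrite !ord1 !mxE /=.
under eq_bigr do rewrite !mxE mulr1.
by rewrite sumr_const card_ord.
Qed.

Lemma min_entry_le0 n (M : 'M[R]_n) mu : (0 < n)%N ->
  (ones R n)^T *m M *m ones R n = 0 -> (forall i j, mu <= M i j) -> mu <= 0.
Proof.
move=> n_gt0 M1 mu_le.
have sum0 : \sum_i \sum_j M i j = 0.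
  transitivity (((ones R n)^T *m M *m ones R n) 0 0); last by rewrite M1 mxE.
  rewrite exchange_big mxE; apply: eq_bigr => j _; rewrite !mxE mulr1.
  by apply: eq_bigr => i _; rewrite !mxE mul1r.
have : \sum_(i < n) \sum_(j < n) mu <= 0.
  by rewrite -[X in _ <= X]sum0; apply: ler_sum => i _; apply: ler_sum => j _.
by rewrite !sumr_const !card_ord -mulrnA pmulrn_lle0 ?muln_gt0 ?n_gt0.
Qed.

Lemma Xtilde_orthonormal n r (X : 'M[R]_(r, n)) : (0 < n)%N ->
  Xtilde X *m (Xtilde X)^T = 1%:M <-> X *m X^T = 1%:M /\ X *m ones R n = 0.
Proof.
move=> n_gt0; set c := (Num.sqrt (n%:R : R))^-1.
have c0 : c != 0 by rewrite invr_eq0 gt_eqF // sqrtr_gt0 ltr0n.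
have cT : (const_mx c : 'M[R]_(1, n))^T = c *: ones R n.
  by rewrite trmx_const /ones scalemx_const mulr1.
have cc : (const_mx c : 'M[R]_(1, n)) *m (const_mx c)^T = 1%:M.
  rewrite cT -[const_mx c]trmxK cT [(c *: _)^T]linearZ -scalemxAr -scalemxAl.
  rewrite ones_tr_mul scalerA scale_scalar_mx -expr2 exprVn sqr_sqrtr ?ler0n //.
  by rewrite mulVf // pnatr_eq0 -lt0n.
have cX : (const_mx c : 'M[R]_(1, n)) *m X^T = c *: (X *m ones R n)^T.
  by rewrite -[const_mx c]trmxK -trmx_mul cT -scalemxAr linearZ.
rewrite /Xtilde tr_col_mx mul_col_row scalar_mx_block cc cX cT -scalemxAr.
split=> [/eq_block_mx[_ _ Xc XX]|[-> ->]]; last by rewrite trmx0 !scaler0.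
by split=> //; move/eqP: Xc; rewrite scaler_eq0 (negbTE c0) => /eqP.
Qed.

Section Laplacian.
Variables (p n : nat) (A : 'M[R]_(p, n)) (beta : R).
Hypothesis beta_ge0 : 0 <= beta.

Lemma Wmat_entry i j : Wmat A beta i j = beta + (A^T *m A) i j.
Proof.
rewrite /Wmat /Atilde tr_col_mx mul_row_col mxE; congr (_ + _).
by rewrite mxE big_ord1 !mxE -expr2 sqr_sqrtr.
Qed.

Lemma WmatE : Wmat A beta = beta *: (ones R n *m (ones R n)^T) + A^T *m A.
Proof.
by apply/matrixP => i j; rewrite Wmat_entry !mxE big_ord1 !mxE !mulr1.
Qed.

Hypothesis A_ones : A *m ones R n = 0.

Lemma graph_laplacian_Wmat :
  graph_laplacian (Wmat A beta) = (n%:R * beta)%:M - Wmat A beta.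
Proof.
rewrite /graph_laplacian WmatE mulmxDl -mulmxA A_ones mulmx0 addr0.
rewrite -scalemxAl -mulmxA ones_tr_mul mul_mx_scalar scalerA mulrC.
by rewrite /ones scalemx_const trmx_const diag_const_mx mulr1.
Qed.

Lemma graph_laplacian_Wmat_ones : graph_laplacian (Wmat A beta) *m ones R n = 0.
Proof.
rewrite graph_laplacian_Wmat mulmxBl WmatE mulmxDl -mulmxA A_ones mulmx0 addr0.
rewrite -scalemxAl -mulmxA ones_tr_mul mul_mx_scalar mul_scalar_mx scalerA.
by rewrite mulrC subrr.
Qed.

Lemma mxtrace_Xtilde_laplacian r (X : 'M[R]_(r, n)) :
  X *m X^T = 1%:M -> X *m ones R n = 0 ->
  \tr (Xtilde X *m graph_laplacian (Wmat A beta) *m (Xtilde X)^T)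
    = n%:R * beta * r%:R - frob2 (A *m X^T).
Proof.
move=> X_orth X1; set c := (Num.sqrt (n%:R : R))^-1.
have cT : (const_mx c : 'M[R]_(1, n))^T = c *: ones R n.
  by rewrite trmx_const /ones scalemx_const mulr1.
rewrite /Xtilde mul_col_mx tr_col_mx mul_col_row mxtrace_block.
rewrite -/c -mulmxA cT -scalemxAr graph_laplacian_Wmat_ones scaler0 mulmx0.
rewrite mxtrace0 add0r graph_laplacian_Wmat WmatE mulmxBr mulmxDr !mulmxBl.
rewrite mulmxDl -scalemxAr !mulmxA X1 mul0mx scaler0 mul0mx add0r raddfB /=.
rewrite mul_mx_scalar -scalemxAl X_orth mxtraceZ mxtrace1 -frob2_trmx.
by rewrite trmx_mul trmxK frob2E trmx_mul trmxK !mulmxA.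
Qed.

Lemma le_solutionP r (X : 'M[R]_(r, n)) : (0 < n)%N ->
  le_solution (graph_laplacian (Wmat A beta)) X <->
  [/\ X *m X^T = 1%:M, X *m ones R n = 0 &
      forall X' : 'M[R]_(r, n), X' *m X'^T = 1%:M -> X' *m ones R n = 0 ->
        frob2 (A *m X'^T) <= frob2 (A *m X^T)].
Proof.
move=> n_gt0; rewrite /le_solution Xtilde_orthonormal //; split.
  move=> [[X_orth X1] X_min]; split=> // X' X'_orth X'1.
  have := X_min X' (proj2 (Xtilde_orthonormal X' n_gt0) (conj X'_orth X'1)).
  rewrite !mxtrace_Xtilde_laplacian //; lra.
move=> [X_orth X1 X_max]; split=> // X'.
move=> /(Xtilde_orthonormal _ n_gt0)[X'_orth X'1].
rewrite !mxtrace_Xtilde_laplacian //; have := X_max X' X'_orth X'1; lra.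
Qed.

End Laplacian.

(** * Moving the rows of an orthonormal matrix off a kernel vector *)

Definition swap_row r n (X : 'M[R]_(r, n)) (q : 'cV[R]_r) (z : 'cV[R]_n) :=
  X + q *m (z - X^T *m q)^T.

Section SwapRow.
Variables (r n : nat) (X : 'M[R]_(r, n)) (q : 'cV[R]_r) (z : 'cV[R]_n).
Hypotheses (X_orth : X *m X^T = 1%:M) (q_unit : q^T *m q = 1%:M).
Hypotheses (z_unit : z^T *m z = 1%:M) (Xz : X *m z = vdot (X^T *m q) z *: q).

Lemma swap_row_gram :
  (swap_row X q z)^T *m swap_row X q z
    = X^T *m X - (X^T *m q) *m (X^T *m q)^T + z *m z^T.
Proof.
set y := X^T *m q.
have qX : q^T *m X = y^T by rewrite trmx_mul trmxK.
rewrite /swap_row -/y [(X + _)^T]raddfD /= trmx_mul trmxK mulmxDl !mulmxDr.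
rewrite !mulmxA -/y -(mulmxA (z - y) q^T X) qX -(mulmxA (z - y) q^T q) q_unit.
rewrite mulmx1 raddfB /= !mulmxBl !mulmxBr.
move: (y *m y^T) (y *m z^T) (z *m y^T) (z *m z^T) (X^T *m X) => a b c d f.
by apply/matrixP => i j; rewrite !mxE; ring.
Qed.

Lemma swap_row_orthonormal : swap_row X q z *m (swap_row X q z)^T = 1%:M.
Proof.
have Xy := orthonormal_mulmxTK q X_orth.
have yy := orthonormal_trmx_unit X_orth q_unit.
set y := X^T *m q in Xy yy *; set c := vdot y z.
have Xd : X *m (z - y) = (c - 1) *: q by rewrite mulmxBr Xz Xy scalerBl scale1r.
have dd : (z - y)^T *m (z - y) = (2 - 2 * c)%:M.
  rewrite [(z - y)^T]raddfB /= mulmxBl !mulmxBr z_unit yy vdotE -/c vdotE.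
  by rewrite vdotC -/c; apply/matrixP => i j; rewrite !mxE; ring.
rewrite /swap_row -/y [(X + _)^T]raddfD /= trmx_mul trmxK mulmxDl !mulmxDr.
rewrite X_orth mulmxA Xd -mulmxA -trmx_mul Xd mulmxA -(mulmxA q) dd.
rewrite [((c - 1) *: q)^T]linearZ -scalemxAr -scalemxAl mul_mx_scalar.
rewrite -scalemxAl; move: (q *m q^T) => Q.
by apply/matrixP => i j; rewrite !mxE; ring.
Qed.

Lemma frob2_swap_row p (A : 'M[R]_(p, n)) :
  frob2 (A *m (swap_row X q z)^T)
    = frob2 (A *m X^T) - frob2 (A *m (X^T *m q)) + frob2 (A *m z).
Proof.
rewrite !frob2_mulmxT swap_row_gram !frob2E !trmx_mul !mulmxA mulmxDr mulmxBr.
by rewrite mulmxDl mulmxBl mxtraceD [\tr (_ - _)]raddfB /= !mulmxA.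
Qed.

End SwapRow.

Section Improvement.
Variables (p n r : nat) (A : 'M[R]_(p, n)) (e : 'cV[R]_n).
Variables (X : 'M[R]_(r, n)) (q : 'cV[R]_r) (m : R).
Hypotheses (Ae : A *m e = 0) (X_orth : X *m X^T = 1%:M).
Hypotheses (q_unit : q^T *m q = 1%:M) (m_gt0 : 0 < m) (Xe : X *m e = m *: q).

Local Notation y := (X^T *m q).

Let Xy : X *m y = q. Proof. exact: orthonormal_mulmxTK. Qed.

Let y_unit : y^T *m y = 1%:M. Proof. exact: orthonormal_trmx_unit. Qed.

Let ye : y^T *m e = m%:M.
Proof. by rewrite trmx_mul trmxK -mulmxA Xe -scalemxAr q_unit scalemx1. Qed.

Let q_neq0 : q != 0.
Proof.
apply/eqP => q0; move/eqP: q_unit; rewrite q0 mulmx0 eq_sym.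
by rewrite (negbTE (matrix_nonzero1 _ 0)).
Qed.

Lemma swap_row_improves (zz : 'cV[R]_n) :
  zz != 0 -> X *m zz = vdot y zz *: q -> zz^T *m e = 0 ->
  frob2 (A *m y) * vdot zz zz < frob2 (A *m zz) ->
  exists X2 : 'M[R]_(r, n),
    [/\ X2 *m X2^T = 1%:M, X2 *m e = 0 & frob2 (A *m X^T) < frob2 (A *m X2^T)].
Proof.
move=> zz0 Xzz zz_e lt_zz; have [k k_gt0 zzk] := vdot_sqr zz0.
have z_unit := unit_scaleV (lt0r_neq0 k_gt0) zzk.
have Xz : X *m (k^-1 *: zz) = vdot y (k^-1 *: zz) *: q.
  by rewrite -scalemxAr Xzz vdotZr scalerA.
exists (swap_row X q (k^-1 *: zz)); split.
- exact: swap_row_orthonormal.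
- rewrite /swap_row mulmxDl -mulmxA [(_ - y)^T]raddfB /= mulmxBl ye.
  rewrite [(_ *: zz)^T]linearZ -scalemxAl zz_e scaler0 sub0r mulmxN.
  by rewrite mul_mx_scalar Xe subrr.
rewrite frob2_swap_row // -scalemxAr frob2Z.
suff : frob2 (A *m y) < k^-1 ^+ 2 * frob2 (A *m zz) by lra.
rewrite -(ltr_pM2r (exprn_gt0 2 k_gt0)) mulrAC -exprMn mulVf ?gt_eqF //.
by rewrite expr1n mul1r -zzk.
Qed.

Lemma improve_Ay_neq0 : A *m y != 0 ->
  exists X2 : 'M[R]_(r, n),
    [/\ X2 *m X2^T = 1%:M, X2 *m e = 0 & frob2 (A *m X^T) < frob2 (A *m X2^T)].
Proof.
move=> Ay0; have e0 : e != 0.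
  apply: contra_neq q_neq0 => e0; apply/eqP; move/eqP: Xe.
  by rewrite e0 mulmx0 eq_sym scaler_eq0 gt_eqF.
have ee_gt0 := vdot_gt0 e0.
set t := m / vdot e e; set zz := y - t *: e.
have Azz : A *m zz = A *m y by rewrite mulmxBr -scalemxAr Ae scaler0 subr0.
have zz0 : zz != 0 by apply: contra Ay0 => /eqP zz0; rewrite -Azz zz0 mulmx0.
have y_zz : vdot y zz = 1 - t * m.
  by rewrite /vdot mulmxBr -scalemxAr y_unit ye !mxE !eqxx /= !mulr1n.
have zz_e : zz^T *m e = 0.
  rewrite [zz^T]raddfB /= mulmxBl ye [(t *: e)^T]linearZ /= -scalemxAl vdotE.
  by rewrite scale_scalar_mx /t divfK ?gt_eqF // subrr.
have zz_zz : vdot zz zz = vdot y zz.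
  rewrite vdotC {2}/zz /vdot mulmxBr -scalemxAr zz_e scaler0 subr0.
  by rewrite -/(vdot zz y) vdotC.
apply: (swap_row_improves zz0 _ zz_e).
  by rewrite y_zz mulmxBr Xy -scalemxAr Xe scalerA scalerBl scale1r mulrC.
rewrite Azz zz_zz y_zz mulrBr mulr1 ltrBlDr ltrDl.
by rewrite mulr_gt0 ?frob2_gt0 // mulr_gt0 // divr_gt0.
Qed.

(* [Q] projects orthogonally onto the span of [y] plus the orthogonal
   complement of the row space of [X]. *)
Let Q : 'M[R]_n := 1%:M - X^T *m X + y *m y^T.

Let Q_sym : Q^T = Q.
Proof. by rewrite /Q raddfD /= raddfB /= trmx1 !trmx_mul !trmxK. Qed.

Let yP : y^T *m (X^T *m X) = y^T.
Proof. by rewrite mulmxA -trmx_mul Xy trmx_mul trmxK. Qed.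

Let Q_idem : Q *m Q = Q.
Proof.
have PP : X^T *m X *m (X^T *m X) = X^T *m X.
  by rewrite mulmxA -(mulmxA X^T) X_orth mulmx1.
have PY : X^T *m X *m (y *m y^T) = y *m y^T.
  by rewrite (mulmxA _ y) -(mulmxA X^T) Xy.
have YP : y *m y^T *m (X^T *m X) = y *m y^T by rewrite -mulmxA yP.
have YY : y *m y^T *m (y *m y^T) = y *m y^T.
  by rewrite mulmxA -(mulmxA y) y_unit mulmx1.
rewrite /Q !(mulmxDl, mulmxDr, mulNmx, mulmxN, mul1mx, mulmx1) PP PY YP YY.
by move: (X^T *m X) (y *m y^T) => P Y; apply/matrixP => i j; rewrite !mxE; ring.
Qed.

Let XQ : X *m Q = q *m y^T.
Proof.
by rewrite /Q mulmxDr mulmxBr mulmx1 !mulmxA X_orth !mul1mx subrr add0r.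
Qed.

Let yQ : y^T *m Q = y^T.
Proof.
by rewrite /Q mulmxDr mulmxBr mulmx1 yP mulmxA y_unit mul1mx subrr add0r.
Qed.

Let Qe : Q *m e = e.
Proof.
rewrite /Q mulmxDl mulmxBl mul1mx -!mulmxA Xe ye mul_mx_scalar -scalemxAr.
by rewrite subrK.
Qed.

Let AQ_neq0 : (r <= \rank A)%N -> A *m y = 0 -> A *m Q != 0.
Proof.
move=> r_le Ay0; apply/eqP => AQ0.
have AXX : A = A *m X^T *m X.
  move/eqP: AQ0; rewrite /Q mulmxDr mulmxBr mulmx1 mulmxA Ay0 mul0mx addr0.
  by rewrite subr_eq0 mulmxA => /eqP.
have /mulmx0_rank_max rank_sum : A *m X^T *m q = 0 by rewrite -mulmxA.
have rank_q : (0 < \rank q)%N by rewrite lt0n mxrank_eq0.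
have := mxrankM_maxl (A *m X^T) X; rewrite -AXX; lia.
Qed.

Lemma improve_Ay_eq0 : (r <= \rank A)%N -> A *m y = 0 ->
  exists X2 : 'M[R]_(r, n),
    [/\ X2 *m X2^T = 1%:M, X2 *m e = 0 & frob2 (A *m X^T) < frob2 (A *m X2^T)].
Proof.
move=> r_le Ay0; have AQ0 := AQ_neq0 r_le Ay0.
have [u AQu] : exists u : 'cV[R]_p, A *m Q *m (A *m Q)^T *m u != 0.
  apply: exists_mulmx_neq0; apply: contraNneq AQ0 => AQQ0.
  by rewrite -frob2_eq0 frob2E AQQ0 mxtrace0.
set zz := (A *m Q)^T *m u.
have Azz : A *m zz = A *m Q *m (A *m Q)^T *m u.
  by rewrite /zz [(A *m Q)^T]trmx_mul Q_sym !mulmxA -(mulmxA A Q Q) Q_idem.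
have zz0 : zz != 0 by apply: contra AQu => /eqP zz0; rewrite -Azz zz0 mulmx0.
apply: (swap_row_improves zz0).
- have -> : X *m zz = q *m (y^T *m zz).
    rewrite /zz [(A *m Q)^T]trmx_mul Q_sym !mulmxA XQ.
    by rewrite -[in RHS](mulmxA q) yQ.
  by rewrite vdotE mul_mx_scalar.
- by rewrite /zz trmx_mul trmxK -!mulmxA Qe Ae mulmx0.
by rewrite Ay0 frob20 mul0r Azz frob2_gt0.
Qed.

End Improvement.

Lemma orthonormal_improve p n r (A : 'M[R]_(p, n)) (e : 'cV[R]_n)
    (X : 'M[R]_(r, n)) :
  A *m e = 0 -> (r <= \rank A)%N -> X *m X^T = 1%:M -> X *m e != 0 ->
  exists X2 : 'M[R]_(r, n),
    [/\ X2 *m X2^T = 1%:M, X2 *m e = 0 & frob2 (A *m X^T) < frob2 (A *m X2^T)].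
Proof.
move=> Ae r_le X_orth Xe0; have [m m_gt0 Xe_m] := vdot_sqr Xe0.
have q_unit := unit_scaleV (lt0r_neq0 m_gt0) Xe_m.
have Xe : X *m e = m *: (m^-1 *: (X *m e)).
  by rewrite scalerA mulfV ?scale1r ?gt_eqF.
have [Ay0|Ay0] := eqVneq (A *m (X^T *m (m^-1 *: (X *m e)))) 0.
- exact: (improve_Ay_eq0 (m := m) Ae X_orth q_unit m_gt0 Xe r_le Ay0).
- exact: (improve_Ay_neq0 (m := m) Ae X_orth q_unit m_gt0 Xe Ay0).
Qed.

Lemma pca_solution_le_solution p n r (A : 'M[R]_(p, n)) beta
    (X : 'M[R]_(r, n)) :
  (0 < n)%N -> 0 <= beta -> A *m ones R n = 0 -> (r <= \rank A)%N ->
  pca_solution A X <-> le_solution (graph_laplacian (Wmat A beta)) X.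
Proof.
move=> n_gt0 beta_ge0 A1 r_le; rewrite pca_solutionP le_solutionP //; split.
  move=> [X_orth X_max]; have X1 : X *m ones R n = 0.
    apply/eqP; apply: contraT => X1.
    have [X2 [X2_orth _ lt_X2]] := orthonormal_improve A1 r_le X_orth X1.
    by have := X_max X2 X2_orth; rewrite leNgt lt_X2.
  by split=> // X' X'_orth _; apply: X_max.
move=> [X_orth X1 X_max]; split=> // X' X'_orth.
have [X'1|X'1] := eqVneq (X' *m ones R n) 0; first exact: X_max.
have [X2 [X2_orth X2_1 lt_X2]] := orthonormal_improve A1 r_le X'_orth X'1.
exact: le_trans (ltW lt_X2) (X_max X2 X2_orth X2_1).
Qed.

(** * Ky Fan's maximum principle *)

Lemma sum_mul_le_top k r (a c : 'I_k -> R) : (0 < r)%N -> (r <= k)%N ->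
  (forall i j : 'I_k, (i <= j)%N -> a j <= a i) -> (forall i, 0 <= a i) ->
  (forall i, 0 <= c i <= 1) -> \sum_i c i <= r%:R ->
  \sum_i a i * c i <= \sum_i a i * (i < r)%N%:R.
Proof.
move=> r_gt0 r_le a_anti a_ge0 c01 c_sum.
have r1_lt : (r.-1 < k)%N by rewrite prednK.
set T := a (Ordinal r1_lt).
have term i : (a i - T) * (c i - (i < r)%N%:R) <= 0.
  have /andP[c_ge0 c_le1] := c01 i; case: ltnP => ir.
    have : T <= a i by apply: a_anti; rewrite /= -ltnS prednK.
    by rewrite -subr_ge0 => aT; rewrite mulr_ge0_le0 // subr_le0.
  have : a i <= T by apply: a_anti; rewrite /= (leq_trans (leq_pred r) ir).
  by rewrite -subr_le0 => aT; rewrite mulr_le0_ge0 // subr0.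
have ind_sum : \sum_(i < k) ((i < r)%N%:R : R) = r%:R.
  rewrite (eq_bigr (fun i : 'I_k => if (i < r)%N then 1 else 0)).
    by rewrite -big_mkcond /=
      -(big_ord_widen _ (fun=> 1) r_le) sumr_const card_ord.
  by move=> i _; case: ifP.
have : \sum_(i < k) (a i - T) * (c i - (i < r)%N%:R) <= 0.
  by apply: sumr_le0 => i _; apply: term.
have -> : \sum_(i < k) (a i - T) * (c i - (i < r)%N%:R)
    = \sum_(i < k) a i * c i - \sum_(i < k) a i * (i < r)%N%:R
      - T * (\sum_(i < k) c i - \sum_(i < k) ((i < r)%N%:R : R)).
  rewrite -[\sum_(i < k) c i - _]sumrB mulr_sumr -!sumrB.
  by apply: eq_bigr => i _; ring.
rewrite ind_sum => sum_le0.
have : T * (\sum_(i < k) c i - r%:R) <= 0.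
  by rewrite mulr_ge0_le0 ?a_ge0 ?subr_le0.
lra.
Qed.

Lemma first_rows_orthonormal k n r (hr : (r <= k)%N) (V : 'M[R]_(k, n)) :
  V *m V^T = 1%:M -> first_rows hr V *m (first_rows hr V)^T = 1%:M.
Proof.
move=> V_orth; apply/matrixP => i j.
have -> : (first_rows hr V *m (first_rows hr V)^T) i j
          = (V *m V^T) (widen_ord hr i) (widen_ord hr j).
  by rewrite !mxE; apply: eq_bigr => l _; rewrite !mxE.
by rewrite V_orth !mxE.
Qed.

Lemma frob2_row_first_rows k n r (hr : (r <= k)%N) (V : 'M[R]_(k, n)) i :
  V *m V^T = 1%:M -> frob2 (row i (V *m (first_rows hr V)^T)) = (i < r)%N%:R.
Proof.
move=> V_orth; rewrite frob2_row.
have VVr j : (V *m (first_rows hr V)^T) i j = (V *m V^T) i (widen_ord hr j).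
  by rewrite !mxE; apply: eq_bigr => l _; rewrite !mxE.
under eq_bigr do rewrite VVr V_orth mxE.
case: ltnP => ir.
  rewrite (bigD1 (Ordinal ir)) //= big1 ?addr0.
    by rewrite (_ : i == _) ?expr1n //; apply/eqP/val_inj.
  move=> j ji; case: eqP => [ij|]; last by rewrite expr0n.
  by move: ji; rewrite (_ : j == _) //; apply/eqP/val_inj; rewrite /= ij.
rewrite big1 // => j _; case: eqP => [ij|]; last by rewrite expr0n.
move: (ltn_ord j); rewrite -[nat_of_ord j]/(nat_of_ord (widen_ord hr j)) -ij.
by rewrite ltnNge ir.
Qed.

Lemma frob2_svd p n r (A : 'M[R]_(p, n)) (U : 'M[R]_(p, \rank A))
    (s : 'rV[R]_(\rank A)) (V : 'M[R]_(\rank A, n)) (X : 'M[R]_(r, n)) :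
  compact_svd U s V ->
  frob2 (A *m X^T) = \sum_i s 0 i ^+ 2 * frob2 (row i (V *m X^T)).
Proof.
case=> UU _ _ _ A_svd; rewrite [in LHS]A_svd -!mulmxA frob2_isometry //.
exact: frob2_diag_mul.
Qed.

Lemma ky_fan_first_rows p n r (A : 'M[R]_(p, n)) (hr : (r <= \rank A)%N)
    (U : 'M[R]_(p, \rank A)) (s : 'rV[R]_(\rank A)) (V : 'M[R]_(\rank A, n)) :
  (0 < r)%N -> compact_svd U s V ->
  forall X : 'M[R]_(r, n), X *m X^T = 1%:M ->
    frob2 (A *m X^T) <= frob2 (A *m (first_rows hr V)^T).
Proof.
move=> r_gt0 svd X X_orth; have [_ V_orth s_gt0 s_anti _] := svd.
rewrite !(frob2_svd _ svd).
under [X in _ <= X]eq_bigr do rewrite frob2_row_first_rows //.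
apply: sum_mul_le_top => // [i j ij|i|i|].
- by apply: lerXn2r; rewrite ?nnegrE ?(ltW (s_gt0 _)) ?s_anti.
- exact: sqr_ge0.
- rewrite frob2_ge0 row_mul /=; apply: le_trans (frob2_mulmxT_le _ X_orth) _.
  have /matrixP/(_ i i) := V_orth; rewrite !mxE eqxx mulr1n => <-.
  rewrite frob2_row le_eqVlt (eq_bigr (fun j => V i j * V^T j i)) ?eqxx //.
  by move=> j _; rewrite mxE expr2.
rewrite sum_frob2_row -frob2_trmx trmx_mul trmxK.
apply: le_trans (frob2_mulmxT_le _ V_orth) _.
by rewrite frob2E X_orth mxtrace1.
Qed.

End LinearKernelPCA.

Theorem proposition1 (R : rcfType) (p n r : nat) (A : 'M[R]_(p, n)) (beta : R)
  (hA1 : A *m ones R n = 0)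
  (hr0 : (0 < r)%N) (hr : (r <= \rank A)%N)
  (hbeta : is_min_entry (A^T *m A) (- beta)) :
  let W := Wmat A beta in
  let L := graph_laplacian W in
  [/\ (forall i j, 0 <= W i j),
      (forall i j, W i j = lin_kernel beta (col i A) (col j A)),
      (forall X : 'M[R]_(r, n), pca_solution A X <-> le_solution L X)
    & (forall (U : 'M[R]_(p, \rank A)) (s : 'rV[R]_(\rank A)) (V : 'M[R]_(\rank A, n)),
        compact_svd U s V ->
        pca_solution A (first_rows hr V) /\ le_solution L (first_rows hr V))].
Proof.
move=> W L; case: hbeta => min_le [i0 _].
have n_gt0 : (0 < n)%N := leq_ltn_trans (leq0n i0) (ltn_ord i0).
have beta_ge0 : 0 <= beta.
  rewrite -oppr_le0; apply: min_entry_le0 n_gt0 _ min_le.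
  by rewrite mulmxA -trmx_mul -mulmxA hA1 mulmx0.
have pca_le := pca_solution_le_solution _ n_gt0 beta_ge0 hA1 hr.
split.
- by move=> i j; rewrite /W Wmat_entry //; have := min_le i j; lra.
- move=> i j; rewrite /W Wmat_entry // /lin_kernel addrC; congr (_ + _).
  by rewrite !mxE; apply: eq_bigr => k _; rewrite !mxE.
- exact: pca_le.
move=> U s V svd.
suff pca_V : pca_solution A (first_rows hr V) by split=> //; apply/pca_le.
apply/pca_solutionP; split; first by apply: first_rows_orthonormal; case: svd.
exact: ky_fan_first_rows hr0 svd.
Qed.
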